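(* Let $G=(V,E,w)$ be a connected undirected graph with positive edge weights, let $v\in V$, let $E_v$ be a set of node pairs $\{u,v\}$ with $u\neq v$ and $\{u,v\}\notin E$, each $e\in E_v$ having a given positive weight $w(e)$, and let $k\le |E_v|$ be a positive integer. For $S\subseteq E_v$ let $\mathcal{R}(S)$ be the resistance distance of $v$ in $G(S)$. Consider the greedy procedure: start with $S=\emptyset$; for $i=1,\dots,k$, choose $e_i\in E_v\setminus S$ maximizing $\mathcal{R}(S)-\mathcal{R}(S\cup\{e\})$ over $e\in E_v\setminus S$ (ties broken arbitrarily) and set $S\leftarrow S\cup\{e_i\}$. Then the returned set $S$ (with $|S|=k$) satisfies $$\mathcal{R}(\emptyset)-\mathcal{R}(S)\ge\left(1-\frac{1}{e}\right)\left(\mathcal{R}(\emptyset)-\mathcal{R}(S^* )\right),$$ where $S^*$ is a minimizer of $\mathcal{R}(S')$ over all $S'\subseteq E_v$ with $|S'|=k$, and $e$ in $1-\frac1e$ is Euler's number.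
   Context: For a connected weighted graph $H$ on node set $V$, its Laplacian is $\mathbf{L}=\mathbf{D}-\mathbf{A}$ ($\mathbf{A}$ weighted adjacency matrix, $\mathbf{D}$ diagonal weighted degree matrix), with Moore–Penrose pseudoinverse $\mathbf{L}^\dagger$. The resistance distance between nodes $a,b$ is $\mathcal{R}_{ab}=(\mathbf{e}_a-\mathbf{e}_b)^\top\mathbf{L}^\dagger(\mathbf{e}_a-\mathbf{e}_b)$, and the resistance distance of node $v$ is $\mathcal{R}_v=\sum_{u\in V}\mathcal{R}_{uv}$. For $S\subseteq E_v$, $G(S)=(V,E\cup S,w')$ is the graph obtained from $G$ by adding the edges of $S$ with their given weights. *)

From HB Require Import structures.
From mathcomp Require Import all_boot all_order all_algebra.
From mathcomp Require Import reals sequences exp.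
From Stdlib Require Import ClassicalEpsilon.
Set Implicit Arguments. Unset Strict Implicit. Unset Printing Implicit Defensive.
Import Order.TTheory GRing.Theory Num.Theory.
Local Open Scope ring_scope.

Section Defs.
Variable R : realType.
Variable n : nat.

(* Weighted graphs on node set 'I_n are given by a weight function w;
   the edge set is {(i,j) | 0 < w i j}. *)
Definition wgraph (w : 'I_n -> 'I_n -> R) : Prop :=
  (forall i j, w i j = w j i) /\ (forall i, w i i = 0) /\ (forall i j, 0 <= w i j).

Definition edge (w : 'I_n -> 'I_n -> R) : rel 'I_n := fun i j => 0 < w i j.

Definition connected_graph (w : 'I_n -> 'I_n -> R) : Prop :=
  forall i j, connect (edge w) i j.

Definition adjacency (w : 'I_n -> 'I_n -> R) : 'M[R]_n := \matrix_(i, j) w i j.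
Definition degmx (w : 'I_n -> 'I_n -> R) : 'M[R]_n :=
  \matrix_(i, j) (if i == j then \sum_(k < n) w i k else 0).
Definition laplacian (w : 'I_n -> 'I_n -> R) : 'M[R]_n := degmx w - adjacency w.

(* Moore--Penrose pseudoinverse (real case: conjugate transpose = transpose). *)
Definition penrose (A X : 'M[R]_n) : Prop :=
  [/\ A *m X *m A = A, X *m A *m X = X, (A *m X)^T = A *m X & (X *m A)^T = X *m A].
Definition pinv (A : 'M[R]_n) : 'M[R]_n :=
  epsilon (inhabits 0) (fun X => penrose A X).

Definition unitv (a : 'I_n) : 'cV[R]_n := \col_i (if i == a then 1 else 0).

Definition resistance (w : 'I_n -> 'I_n -> R) (a b : 'I_n) : R :=
  ((unitv a - unitv b)^T *m pinv (laplacian w) *m (unitv a - unitv b)) 0 0.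

Definition node_resistance (w : 'I_n -> 'I_n -> R) (v : 'I_n) : R :=
  \sum_(u < n) resistance w u v.

(* G(S): candidate edges {u,v} (u in S) with weight wv u added. *)
Definition add_edges (w : 'I_n -> 'I_n -> R) (v : 'I_n) (wv : 'I_n -> R)
  (S : {set 'I_n}) : 'I_n -> 'I_n -> R :=
  fun i j => w i j + (if (i == v) && (j \in S) then wv j else 0)
                   + (if (j == v) && (i \in S) then wv i else 0).

Definition RS (w : 'I_n -> 'I_n -> R) (v : 'I_n) (wv : 'I_n -> R) (S : {set 'I_n}) : R :=
  node_resistance (add_edges w v wv S) v.

(* s = [:: e_1; ...; e_k] is a possible run of the greedy algorithm
   (arbitrary tie-breaking) on candidate set U, where S_i = {e_1,...,e_i}. *)
Definition greedy_run (w : 'I_n -> 'I_n -> R) (v : 'I_n) (wv : 'I_n -> R)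
  (U : {set 'I_n}) (k : nat) (s : seq 'I_n) : Prop :=
  size s = k /\
  forall i, (i < k)%N ->
    let Si := [set x in take i s] in
    forall d : 'I_n, let ei := nth d s i in
    ei \in U :\: Si /\
    forall e, e \in U :\: Si ->
      RS w v wv Si - RS w v wv (e |: Si) <= RS w v wv Si - RS w v wv (ei |: Si).

End Defs.

(* Ground the node v: replacing row and column v of the Laplacian by those of
   the identity gives a matrix L_v whose inverse has the resistances R_uv on
   its diagonal, so R(S) = tr (L_v + D_S)^-1 - 1, where D_S is the diagonal of
   the weights of the added edges (an edge {u, v} becomes a conductance from u
   to ground).  A discrete minimum principle, which is where connectivity
   enters, shows that L_v + D has an entrywise nonnegative inverse that
   decreases as D grows.  The resolvent identity writes R(S) - R(S + e) as a
   sum of products of two such inverses with the weight of e, so R is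
   nonincreasing and supermodular, and the Nemhauser-Wolsey-Fisher analysis of
   the greedy algorithm gives the factor 1 - 1/e. *)

From HB Require Import structures.
From mathcomp Require Import all_boot all_order all_algebra.
From mathcomp Require Import reals sequences exp.
From mathcomp Require Import ring lra.
From Stdlib Require Import ClassicalEpsilon.
Import Order.TTheory GRing.Theory Num.Theory.
Local Open Scope ring_scope.
Set Implicit Arguments. Unset Strict Implicit. Unset Printing Implicit Defensive.

Lemma expr1B_le_expR (R : realType) (x : R) (k : nat) :
  x <= 1 -> (1 - x) ^+ k <= expR (- (k%:R * x)).
Proof.
move=> x1; rewrite mulrC -mulNr expRM_natr.
by apply: lerXn2r; rewrite ?nnegrE ?subr_ge0 ?expR_ge0 ?expR_ge1Dx.
Qed.

Lemma gain_recurrence (R : realType) (k : nat) (F : nat -> R) (opt : R) :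
  (0 < k)%N -> F 0%N = 0 -> 0 <= opt ->
  (forall i, (i < k)%N -> opt <= F i + k%:R * (F i.+1 - F i)) ->
  (1 - (expR 1)^-1) * opt <= F k.
Proof.
move=> k_gt0 F0 opt_ge0 step.
have k_neq0 : (k%:R : R) != 0 by rewrite pnatr_eq0 -lt0n.
set c := (k%:R : R)^-1.
have c_ge0 : 0 <= c by rewrite invr_ge0.
have c_le1 : c <= 1 by rewrite invf_le1 ?ler1n ?ltr0n.
have decay i : (i <= k)%N -> opt - F i <= (1 - c) ^+ i * opt.
  elim: i => [|i IH] ik; first by rewrite F0 expr0 mul1r subr0.
  have := ler_wpM2l c_ge0 (step i ik); rewrite mulrDr mulrA mulVf // mul1r => hi.
  rewrite exprS -mulrA; apply: le_trans (ler_wpM2l _ (IH (ltnW ik))); last first.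
    by rewrite subr_ge0.
  lra.
have := expr1B_le_expR k c_le1; rewrite /c mulfV // expRN => hk.
have := ler_wpM2r opt_ge0 hk; have := decay k (leqnn k); lra.
Qed.

Section GreedySupermodular.
Variables (R : realType) (T : finType) (U : {set T}) (f : {set T} -> R).
Implicit Types (A B : {set T}) (e : T).
Hypothesis f_antitone : forall A B, A \subset B -> B \subset U -> f B <= f A.
Hypothesis f_supermodular : forall A B e, A \subset B -> B \subset U ->
  e \in U -> e \notin B -> f B - f (e |: B) <= f A - f (e |: A).

Lemma marginal_gain_ge0 A e : A \subset U -> e \in U -> 0 <= f A - f (e |: A).
Proof.
move=> AU eU; rewrite subr_ge0 f_antitone ?subsetUr //.
by rewrite subUset sub1set eU.
Qed.

Lemma marginal_gain_antitone A B e : A \subset B -> B \subset U -> e \in U ->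
  f B - f (e |: B) <= f A - f (e |: A).
Proof.
move=> AB BU eU; have [eB|] := boolP (e \in B); last exact: f_supermodular.
have /setUidPr -> : [set e] \subset B by rewrite sub1set.
by rewrite subrr marginal_gain_ge0 // (subset_trans AB).
Qed.

Lemma marginal_gain_union_le A s : A \subset U -> {subset s <= U} ->
  f A - f (A :|: [set x in s]) <= \sum_(e <- s) (f A - f (e |: A)).
Proof.
move=> AU; elim: s => [|a s IH] sU.
  by rewrite big_nil set_nil setU0 subrr.
have aU : a \in U by apply: sU; exact: mem_head.
have sU' : {subset s <= U} by move=> x xs; apply: sU; rewrite inE xs orbT.
have AsU : A :|: [set x in s] \subset U.
  by rewrite subUset AU; apply/subsetP => x; rewrite inE => /sU'.
have -> : A :|: [set x in a :: s] = a |: (A :|: [set x in s]).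
  by apply/setP => x; rewrite !inE orbCA.
rewrite big_cons; have := IH sU'.
have := marginal_gain_antitone (subsetUl A [set x in s]) AsU aU; lra.
Qed.

Lemma greedy_step_bound A a (Sstar : {set T}) :
  A \subset U -> a \in U ->
  (forall e, e \in U :\: A -> f A - f (e |: A) <= f A - f (a |: A)) ->
  Sstar \subset U -> f A - f Sstar <= #|Sstar|%:R * (f A - f (a |: A)).
Proof.
move=> AU aU best SU; set g := f A - f (a |: A).
have gain_le e : e \in Sstar -> f A - f (e |: A) <= g.
  move=> eS; have eU := subsetP SU e eS.
  have [eA|eA] := boolP (e \in A); last by apply: best; rewrite inE eA eU.
  have /setUidPr -> : [set e] \subset A by rewrite sub1set.
  by rewrite subrr marginal_gain_ge0.
have enumU : {subset enum Sstar <= U} by move=> e; rewrite mem_enum => /(subsetP SU).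
have := marginal_gain_union_le AU enumU; rewrite set_enum big_enum /=.
have : \sum_(e in Sstar) (f A - f (e |: A)) <= #|Sstar|%:R * g.
  by rewrite mulr_natl -sumr_const; apply: ler_sum.
have : f (A :|: Sstar) <= f Sstar by rewrite f_antitone ?subsetUr // subUset AU.
lra.
Qed.

Lemma greedy_approx_ratio k s (x0 : T) (Sstar : {set T}) :
  size s = k ->
  (forall i, (i < k)%N -> let Si := [set x in take i s] in
     nth x0 s i \in U :\: Si /\
     forall e, e \in U :\: Si -> f Si - f (e |: Si) <= f Si - f (nth x0 s i |: Si)) ->
  Sstar \subset U -> #|Sstar| = k ->
  (1 - (expR 1)^-1) * (f set0 - f Sstar) <= f set0 - f [set x in s].
Proof.
move=> size_s greedy SU cardS.
have [k0|k_gt0] := posnP k.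
  by move: size_s cardS; rewrite k0 => /size0nil -> /cards0_eq ->; rewrite set_nil !subrr mulr0.
pose S i := [set x in take i s].
have sU : {subset s <= U}.
  move=> x xs; have := greedy _ (_ : index x s < k)%N; rewrite -size_s index_mem.
  by move=> /(_ xs) [+ _]; rewrite nth_index // inE => /andP[].
have S_sub i : S i \subset U by apply/subsetP => x; rewrite inE => /mem_take/sU.
have S_succ i : (i < k)%N -> S i.+1 = nth x0 s i |: S i.
  by move=> ik; apply/setP => x; rewrite /S (take_nth x0) ?size_s // !inE mem_rcons in_cons.
rewrite -(take_size s) size_s -/(S k).
apply: (@gain_recurrence _ k (fun i => f set0 - f (S i))) => //.
- by rewrite /S take0 set_nil subrr.
- by rewrite subr_ge0 f_antitone ?sub0set.
move=> i ik; rewrite S_succ //.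
have [eiU best] := greedy i ik; rewrite -/(S i) in eiU best.
have eiU' : nth x0 s i \in U by move: eiU; rewrite inE => /andP[].
have := greedy_step_bound (S_sub i) eiU' best SU; rewrite cardS; lra.
Qed.
End GreedySupermodular.

Lemma const_mx1_mul (R : pzRingType) m n p :
  (const_mx 1 : 'M[R]_(m, n)) *m (const_mx 1 : 'M_(n, p)) = n%:R *: const_mx 1.
Proof.
apply/matrixP => i j; rewrite !mxE (eq_bigr (fun=> 1)) => [|k _]; last by rewrite !mxE mulr1.
by rewrite sumr_const card_ord mulr1.
Qed.

Section Laplacian.
Variables (R : realType) (n : nat).
Implicit Types (W : 'I_n -> 'I_n -> R) (i j : 'I_n).

Lemma laplacianE W i j :
  laplacian W i j = (if i == j then \sum_k W i k else 0) - W i j.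
Proof. by rewrite !mxE. Qed.

Lemma laplacian_mulE W (x : 'cV[R]_n) i :
  (laplacian W *m x) i 0 = \sum_k W i k * (x i 0 - x k 0).
Proof.
rewrite /laplacian; have -> : degmx W = diag_mx (\row_i \sum_k W i k).
  by apply/matrixP => i' j; rewrite !mxE; case: eqVneq.
rewrite mulmxBl mul_diag_mx !mxE mulr_suml -sumrB.
by apply: eq_bigr => k _; rewrite !mxE mulrBr.
Qed.

Lemma laplacian_mx1 W m : laplacian W *m (const_mx 1 : 'M_(n, m)) = 0.
Proof.
apply/matrixP => i j; rewrite [LHS]mxE [RHS]mxE.
under eq_bigr do rewrite [const_mx _ _ _]mxE mulr1 laplacianE.
by rewrite sumrB -big_mkcond (big_pred1 i) ?subrr // => k; exact: eq_sym.
Qed.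

Variable W : 'I_n -> 'I_n -> R.
Hypothesis W_sym : forall i j, W i j = W j i.

Lemma trmx_laplacian : (laplacian W)^T = laplacian W.
Proof.
apply/matrixP => i j; rewrite mxE !laplacianE W_sym.
by case: eqVneq => [->|].
Qed.

Lemma mx1_laplacian m : (const_mx 1 : 'M_(m, n)) *m laplacian W = 0.
Proof.
by rewrite -trmx_laplacian -[const_mx 1]trmx_const -trmx_mul laplacian_mx1 trmx0.
Qed.

End Laplacian.

Section Penrose.
Variables (R : realType) (n : nat).

Lemma penrose_of_projector (A X P : 'M[R]_n) :
  A *m X = P -> X *m A = P -> P^T = P -> P *m A = A -> X *m P = X -> penrose A X.
Proof.
move=> AX XA Psym PA XP; split; first by rewrite AX PA.
- by rewrite -mulmxA AX XP.
- by rewrite AX Psym.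
- by rewrite XA Psym.
Qed.

Lemma penrose_pinv (A : 'M[R]_n) : (exists X, penrose A X) -> penrose A (pinv A).
Proof. exact: epsilon_spec. Qed.

Lemma unitvE (a : 'I_n) : unitv R a = delta_mx a 0.
Proof. by apply/matrixP => i j; rewrite !mxE ord1 andbT; case: (i == a). Qed.

Lemma resistance_potential (W : 'I_n -> 'I_n -> R) (a b : 'I_n) (z : 'cV_n) :
  (forall i j, W i j = W j i) -> (exists X, penrose (laplacian W) X) ->
  laplacian W *m z = unitv R a - unitv R b -> resistance W a b = z a 0 - z b 0.
Proof.
move=> W_sym ex_pinv Lz; have [LXL _ _ _] := penrose_pinv ex_pinv.
set L := laplacian W in LXL Lz *.
rewrite /resistance -Lz trmx_mul trmx_laplacian // !mulmxA.
have -> : z^T *m L *m pinv L *m L = z^T *m (L *m pinv L *m L) by rewrite !mulmxA.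
by rewrite LXL -mulmxA Lz !unitvE mulmxBr -!colE !mxE.
Qed.

End Penrose.

Section Grounded.
Variables (R : realType) (n : nat) (v : 'I_n).
Implicit Types (i j k : 'I_n).

Definition grounded_lap (W : 'I_n -> 'I_n -> R) : 'M[R]_n := \matrix_(i, j)
  if i == v then (j == v)%:R else if j == v then 0 else laplacian W i j.

Variable W : 'I_n -> 'I_n -> R.
Hypothesis W_sym : forall i j, W i j = W j i.
Hypothesis grounded_unit : grounded_lap W \in unitmx.

Local Notation L := (laplacian W).
Local Notation G := (invmx (grounded_lap W)).

Lemma trmx_grounded_inv : G^T = G.
Proof.
rewrite trmx_inv; congr invmx; apply/matrixP => i j; rewrite !mxE.
have [iv|iv] := eqVneq i v; have [jv|jv] := eqVneq j v => //.
by rewrite W_sym; case: eqVneq => [->|].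
Qed.

Lemma grounded_inv_row j : G v j = (j == v)%:R.
Proof.
have /matrixP/(_ v j) := mulmxV grounded_unit; rewrite !mxE eq_sym => <-.
rewrite (bigD1 v) //= big1 ?addr0 => [|k kv]; first by rewrite !mxE !eqxx mul1r.
by rewrite !mxE eqxx (negbTE kv) mul0r.
Qed.

Lemma grounded_inv_col j : G j v = (j == v)%:R.
Proof. by rewrite -trmx_grounded_inv mxE grounded_inv_row. Qed.

Lemma laplacian_mul_grounded_inv i j : j != v ->
  (L *m G) i j = (i == j)%:R - (i == v)%:R.
Proof.
move=> jv.
have off_v i' : i' != v -> (L *m G) i' j = (i' == j)%:R.
  move=> i'v; have /matrixP/(_ i' j) := mulmxV grounded_unit; rewrite !mxE => <-.
  apply: eq_bigr => k _; rewrite !mxE (negbTE i'v).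
  by have [->|//] := eqVneq k v; rewrite grounded_inv_row (negbTE jv) !mulr0.
have [->|iv] := eqVneq i v; last by rewrite off_v // subr0.
have : \sum_i (L *m G) i j = 0.
  have := congr1 (fun M => (M *m G) 0 j) (mx1_laplacian W_sym 1).
  rewrite /= mul0mx -mulmxA mxE [RHS]mxE => col_sum.
  by apply: etrans col_sum; apply: eq_bigr => i' _; rewrite [const_mx _ _ _]mxE mul1r.
rewrite (bigD1 v) //= (eq_bigr (fun i' => (i' == j)%:R) off_v).
rewrite (bigD1 j) ?jv //= eqxx big1 ?addr0 => [|i' /andP[_ /negbTE ->]] //.
by rewrite eq_sym (negbTE jv) sub0r => /eqP; rewrite addr_eq0 => /eqP.
Qed.

(* The pseudoinverse of L is P G0 P, where P projects orthogonally onto the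
   vectors with zero sum and G0 is G with row and column v cleared. *)
Let P : 'M[R]_n := 1%:M - n%:R^-1 *: const_mx 1.

Let n_neq0 : (n%:R : R) != 0.
Proof. by rewrite pnatr_eq0 -lt0n (leq_ltn_trans _ (ltn_ord v)). Qed.

Let mx1_P m : (const_mx 1 : 'M_(m, n)) *m P = 0.
Proof.
by rewrite mulmxBr mulmx1 -scalemxAr const_mx1_mul scalerA mulVf // scale1r subrr.
Qed.

Let P_mx1 m : P *m (const_mx 1 : 'M_(n, m)) = 0.
Proof.
by rewrite mulmxBl mul1mx -scalemxAl const_mx1_mul scalerA mulVf // scale1r subrr.
Qed.

Let trmx_P : P^T = P.
Proof. by rewrite linearB /= trmx1 linearZ /= trmx_const. Qed.

Let laplacian_P : L *m P = L.
Proof. by rewrite mulmxBr mulmx1 -scalemxAr laplacian_mx1 scaler0 subr0. Qed.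

Let P_laplacian : P *m L = L.
Proof. by rewrite mulmxBl mul1mx -scalemxAl mx1_laplacian // scaler0 subr0. Qed.

Let P_idem : P *m P = P.
Proof. by rewrite {1}/P mulmxBl mul1mx -scalemxAl mx1_P scaler0 subr0. Qed.

Let E : 'M[R]_n := (delta_mx v 0 : 'cV_n) *m const_mx 1.
Let G0 := G - delta_mx v v.

Let E_entry i j : E i j = (i == v)%:R.
Proof. by rewrite mxE big_ord1 !mxE andbT mulr1. Qed.

Let G0_entry i j : G0 i j = if j == v then 0 else G i j.
Proof.
rewrite !mxE; have [->|jv] := eqVneq j v; first by rewrite grounded_inv_col andbT subrr.
by rewrite andbF subr0.
Qed.

Let laplacian_G0 : L *m G0 = 1%:M - E.
Proof.
apply/matrixP => i j; rewrite mxE [RHS]mxE [(- E) i j]mxE E_entry mxE.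
under eq_bigr do rewrite G0_entry.
have [->|jv] := eqVneq j v; first by rewrite big1 ?subrr // => k _; rewrite mulr0.
by have := laplacian_mul_grounded_inv i jv; rewrite mxE => ->.
Qed.

Let trmx_G0 : G0^T = G0.
Proof. by rewrite linearB /= trmx_grounded_inv trmx_delta. Qed.

Let G0_laplacian : G0 *m L = 1%:M - E^T.
Proof. by rewrite -trmx_G0 -(trmx_laplacian W_sym) -trmx_mul laplacian_G0 linearB /= trmx1. Qed.

Let E_P : E *m P = 0.
Proof. by rewrite -mulmxA mx1_P mulmx0. Qed.

Let P_trE : P *m E^T = 0.
Proof. by rewrite -trmx_P -trmx_mul E_P trmx0. Qed.

Lemma laplacian_penrose : exists X, penrose L X.
Proof.
exists (P *m G0 *m P); apply: (penrose_of_projector (P := P)) => //.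
- by rewrite !mulmxA laplacian_P laplacian_G0 mulmxBl mul1mx E_P subr0.
- by rewrite -!mulmxA P_laplacian G0_laplacian mulmxBr mulmx1 P_trE subr0.
- by rewrite -mulmxA P_idem.
Qed.

Lemma resistance_grounded u : u != v -> resistance W u v = G u u.
Proof.
move=> uv; rewrite (resistance_potential (z := col u G) W_sym laplacian_penrose).
  by rewrite !mxE grounded_inv_row (negbTE uv) subr0.
apply/matrixP => i k; rewrite ord1 colE mulmxA -colE [LHS]mxE (laplacian_mul_grounded_inv _ uv) !mxE.
by case: (i == u); case: (i == v).
Qed.

Lemma node_resistance_grounded : node_resistance W v = \tr G - 1.
Proof.
rewrite /node_resistance /mxtrace (bigD1 v) //= [in RHS](bigD1 v) //= grounded_inv_row eqxx.
rewrite {1}/resistance subrr mulmx0 mxE add0r addrC addrK.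
by apply: eq_bigr => u; apply: resistance_grounded.
Qed.

End Grounded.

Lemma unitmx_of_mul_inj (R : fieldType) (n : nat) (A : 'M[R]_n) :
  (forall y : 'cV_n, A *m y = 0 -> y = 0) -> A \in unitmx.
Proof.
move=> A_inj; rewrite -unitmx_tr -row_free_unit -kermx_eq0.
apply/eqP/row_matrixP => i; rewrite row0.
have : row i (kermx A^T) *m A^T = 0 by rewrite -row_mul mulmx_ker row0.
set x := row i _ => /(congr1 trmx); rewrite trmx_mul trmxK trmx0.
by move=> /A_inj /(congr1 trmx); rewrite trmxK trmx0.
Qed.

Section Shunt.
Variables (R : realType) (n : nat) (v : 'I_n) (w : 'I_n -> 'I_n -> R).
Hypothesis w_graph : wgraph w.
Hypothesis w_connected : connected_graph w.
Implicit Types (d : 'I_n -> R) (i j k : 'I_n).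

(* [d i] is a conductance from node [i] to the grounded node [v]. *)
Definition grounded_shunt d : 'M[R]_n := grounded_lap v w + diag_mx (\row_i d i).

Lemma grounded_shunt_mul_v d (y : 'cV_n) :
  (grounded_shunt d *m y) v 0 = (1 + d v) * y v 0.
Proof.
rewrite mulmxDl mul_diag_mx [LHS]mxE !mxE mulrDl mul1r; congr (_ + _).
rewrite (bigD1 v) //= big1 ?addr0 => [|k kv]; first by rewrite !mxE !eqxx mul1r.
by rewrite !mxE eqxx (negbTE kv) mul0r.
Qed.

Definition ground (y : 'cV[R]_n) k := if k == v then 0 else y k 0.

Lemma grounded_shunt_mul d (y : 'cV_n) i : i != v ->
  (grounded_shunt d *m y) i 0 =
  \sum_k w i k * (ground y i - ground y k) + d i * ground y i.
Proof.
move=> iv; rewrite /ground (negbTE iv) mulmxDl mul_diag_mx [LHS]mxE !mxE; congr (_ + _).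
transitivity ((laplacian w *m \col_k ground y k) i 0).
  rewrite [RHS]mxE; apply: eq_bigr => k _; rewrite !mxE /ground (negbTE iv).
  by case: (k == v); rewrite ?mul0r ?mulr0.
by rewrite laplacian_mulE; apply: eq_bigr => k _; rewrite !mxE /ground (negbTE iv).
Qed.

Lemma grounded_shunt_min_spread d (y : 'cV_n) m x z :
  0 <= d x -> m < 0 -> (forall k, m <= ground y k) -> ground y x = m ->
  0 <= (grounded_shunt d *m y) x 0 -> edge w x z -> ground y z = m.
Proof.
move=> dx_ge0 m_lt0 ground_ge yx My_ge0 wxz; have [_ [_ w_ge0]] := w_graph.
have xv : x != v by apply/eqP => xv; move: yx; rewrite xv /ground eqxx; lra.
have terms_ge0 k : 0 <= w x k * (ground y k - m) by rewrite mulr_ge0 ?subr_ge0.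
have sum_eq0 : \sum_k w x k * (ground y k - m) = 0.
  apply/eqP; rewrite eq_le sumr_ge0 ?andbT //.
  move: My_ge0; rewrite grounded_shunt_mul // yx.
  have : \sum_k w x k * (m - ground y k) = - \sum_k w x k * (ground y k - m).
    by rewrite -sumrN; apply: eq_bigr => k _; rewrite -mulrN opprB.
  have : d x * m <= 0 by rewrite mulr_ge0_le0 // ltW.
  lra.
have /eqP := psumr_eq0P (fun k _ => terms_ge0 k) sum_eq0 (isT : true) (i := z).
by rewrite mulf_eq0 gt_eqF //= subr_eq0 => /eqP.
Qed.

(* The nodes where y, with its entry at v cleared, attains a minimum m < 0 form
   a set closed under edges that misses v. *)
Lemma grounded_shunt_min_principle d (y : 'cV_n) :
  (forall i, 0 <= d i) -> (forall i, 0 <= (grounded_shunt d *m y) i 0) ->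
  forall i, 0 <= y i 0.
Proof.
move=> d_ge0 My_ge0 j; rewrite leNgt; apply/negP => yj_lt0.
have [i0 _ y_min] := arg_minP (fun k => y k 0) (isT : xpredT v).
set m := y i0 0 in y_min.
have m_lt0 : m < 0 := le_lt_trans (y_min j isT) yj_lt0.
have yv_ge0 : 0 <= y v 0.
  by have := My_ge0 v; rewrite grounded_shunt_mul_v pmulr_rge0 // ltr_wpDr ?d_ge0.
have i0v : i0 != v by apply/eqP => i0v; move: yv_ge0; rewrite -i0v -/m; lra.
have ground_ge k : m <= ground y k.
  by rewrite /ground; case: eqP => _; [exact: ltW | exact: y_min].
pose Q := [pred k | ground y k == m].
have Q_closed : closed (edge w) Q.
  have [w_sym _] := w_graph.
  apply: intro_closed => [|x z wxz /eqP yx].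
    by apply: sym_connect_sym => a b; rewrite /edge w_sym.
  by rewrite inE (grounded_shunt_min_spread (d_ge0 x) m_lt0 ground_ge yx (My_ge0 x) wxz).
have := closed_connect Q_closed (w_connected i0 v).
by rewrite !inE /ground (negbTE i0v) !eqxx eq_sym (lt_eqF m_lt0).
Qed.

Local Notation X d := (invmx (grounded_shunt d)).

Lemma grounded_shunt_unit d : (forall i, 0 <= d i) -> grounded_shunt d \in unitmx.
Proof.
move=> d_ge0; apply: unitmx_of_mul_inj => y My0.
have ge0 (z : 'cV_n) : grounded_shunt d *m z = 0 -> forall i, 0 <= z i 0.
  by move=> Mz0; apply: grounded_shunt_min_principle => // i; rewrite Mz0 mxE.
have /ge0 y_ge0 := My0; have /ge0 Ny_ge0 : grounded_shunt d *m - y = 0 by rewrite mulmxN My0 oppr0.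
apply/matrixP => i k; rewrite ord1 mxE; apply/eqP; rewrite eq_le y_ge0 andbT.
by have := Ny_ge0 i; rewrite mxE oppr_ge0.
Qed.

Lemma grounded_shunt_inv_ge0 d : (forall i, 0 <= d i) -> forall i j, 0 <= X d i j.
Proof.
move=> d_ge0 i j.
have Mcol : grounded_shunt d *m col j (X d) = delta_mx j 0.
  by rewrite colE mulmxA mulmxV ?grounded_shunt_unit ?mul1mx.
have := grounded_shunt_min_principle d_ge0 (y := col j (X d)) _ i; rewrite mxE; apply.
by move=> k; rewrite Mcol mxE ler0n.
Qed.

Lemma grounded_shunt_invBE d d' i j :
  (forall i, 0 <= d i) -> (forall i, 0 <= d' i) ->
  X d i j - X d' i j = \sum_k X d i k * (d' k - d k) * X d' k j.
Proof.
move=> d_ge0 d'_ge0.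
have MB : grounded_shunt d' - grounded_shunt d = diag_mx (\row_k (d' k - d k)).
  rewrite /grounded_shunt opprD addrACA subrr add0r -linearB /=; congr diag_mx.
  by apply/matrixP => ? k; rewrite !mxE.
have : X d - X d' = X d *m (grounded_shunt d' - grounded_shunt d) *m X d'.
  rewrite mulmxBr mulmxBl mulVmx ?grounded_shunt_unit // mul1mx -mulmxA.
  by rewrite mulmxV ?grounded_shunt_unit // mulmx1.
rewrite MB mul_mx_diag => /matrixP/(_ i j); rewrite !mxE => ->.
by apply: eq_bigr => k _; rewrite !mxE.
Qed.

Lemma grounded_shunt_inv_le d d' : (forall i, 0 <= d i) -> (forall i, d i <= d' i) ->
  forall i j, X d' i j <= X d i j.
Proof.
move=> d_ge0 dd' i j; have d'_ge0 k : 0 <= d' k := le_trans (d_ge0 k) (dd' k).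
rewrite -subr_ge0 grounded_shunt_invBE //; apply: sumr_ge0 => k _.
by rewrite !mulr_ge0 ?subr_ge0 ?grounded_shunt_inv_ge0.
Qed.

Lemma tr_grounded_shunt_invB d d' : (forall i, 0 <= d i) -> (forall i, 0 <= d' i) ->
  \tr (X d) - \tr (X d') = \sum_i \sum_k X d i k * (d' k - d k) * X d' k i.
Proof.
by move=> d_ge0 d'_ge0; rewrite -sumrB; apply: eq_bigr => i _; rewrite grounded_shunt_invBE.
Qed.

Lemma tr_grounded_shunt_inv_supermodular d1 d2 d1' d2' :
  (forall i, 0 <= d1 i) -> (forall i, d1 i <= d2 i) -> (forall i, d2 i <= d2' i) ->
  (forall i, d1' i - d1 i = d2' i - d2 i) ->
  \tr (X d2) - \tr (X d2') <= \tr (X d1) - \tr (X d1').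
Proof.
move=> d1_ge0 d12 d22' incr.
have d11' k : d1 k <= d1' k by rewrite -subr_ge0 incr subr_ge0.
have d1'2' k : d1' k <= d2' k by have := incr k; have := d12 k; lra.
have d2_ge0 k : 0 <= d2 k := le_trans (d1_ge0 k) (d12 k).
have d1'_ge0 k : 0 <= d1' k := le_trans (d1_ge0 k) (d11' k).
have d2'_ge0 k : 0 <= d2' k := le_trans (d2_ge0 k) (d22' k).
rewrite !tr_grounded_shunt_invB //; apply: ler_sum => i _; apply: ler_sum => k _.
rewrite -incr; have incr_ge0 : 0 <= d1' k - d1 k by rewrite subr_ge0.
apply: ler_pM; rewrite ?mulr_ge0 ?grounded_shunt_inv_ge0 //.
  by rewrite ler_wpM2r ?grounded_shunt_inv_le.
exact: grounded_shunt_inv_le.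
Qed.

End Shunt.

Section CandidateEdges.
Variables (R : realType) (n : nat) (w : 'I_n -> 'I_n -> R) (v : 'I_n).
Variables (U : {set 'I_n}) (wv : 'I_n -> R).
Hypothesis w_graph : wgraph w.
Hypothesis w_connected : connected_graph w.
Hypothesis vU : v \notin U.
Hypothesis wv_gt0 : forall u, u \in U -> 0 < wv u.
Implicit Types (A B T : {set 'I_n}) (i j k : 'I_n).

Definition edge_shunt T i := if i \in T then wv i else 0.

Lemma edge_shunt_ge0 T i : T \subset U -> 0 <= edge_shunt T i.
Proof. by rewrite /edge_shunt; case: ifP => // iT /subsetP/(_ i iT)/wv_gt0/ltW. Qed.

Lemma edge_shunt_le A B i : A \subset B -> B \subset U -> edge_shunt A i <= edge_shunt B i.
Proof.
move=> AB BU; have := edge_shunt_ge0 i BU.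
by rewrite /edge_shunt; have [/(subsetP AB) ->|] := boolP (i \in A).
Qed.

Lemma edge_shunt_setU1 T e i : e \notin T ->
  edge_shunt (e |: T) i - edge_shunt T i = if i == e then wv e else 0.
Proof.
rewrite /edge_shunt in_setU1; have [->|_] := eqVneq i e => [/negbTE ->|_]; last by rewrite subrr.
by rewrite subr0.
Qed.

Lemma grounded_lap_add_edges T : v \notin T ->
  grounded_lap v (add_edges w v wv T) = grounded_shunt v w (edge_shunt T).
Proof.
move=> vT; apply/matrixP => i j; rewrite !mxE.
have [->|iv] := eqVneq i v; first by rewrite /edge_shunt (negbTE vT) mul0rn addr0.
have [->|jv] := eqVneq j v; first by rewrite (negbTE iv) mulr0n addr0.
rewrite /add_edges (negbTE iv) (negbTE jv) /= !addr0.
have [<-|ij] := eqVneq i j; last by rewrite mulr0n addr0.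
rewrite big_split /= big_split /= big1_eq addr0 mulr1n.
suff -> : \sum_k (if (k == v) && (i \in T) then wv i else 0) = edge_shunt T i by ring.
rewrite /edge_shunt; case: (i \in T); under eq_bigr do rewrite ?andbT ?andbF.
  by rewrite -big_mkcond big_pred1_eq.
by rewrite big1.
Qed.

Lemma RS_trace T : T \subset U ->
  RS w v wv T = \tr (invmx (grounded_shunt v w (edge_shunt T))) - 1.
Proof.
move=> TU; have vT : v \notin T by apply: contra vU => /(subsetP TU).
have [w_sym _] := w_graph.
have sym i j : add_edges w v wv T i j = add_edges w v wv T j i.
  by rewrite /add_edges w_sym; ring.
rewrite /RS (node_resistance_grounded sym) grounded_lap_add_edges //.
by apply: (grounded_shunt_unit v w_graph w_connected) => i; apply: edge_shunt_ge0.
Qed.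

Lemma RS_antitone A B : A \subset B -> B \subset U -> RS w v wv B <= RS w v wv A.
Proof.
move=> AB BU; have AU := subset_trans AB BU.
rewrite !RS_trace // lerD2r; apply: ler_sum => i _.
apply: (grounded_shunt_inv_le v w_graph w_connected) => k; first exact: edge_shunt_ge0.
exact: edge_shunt_le.
Qed.

Lemma RS_supermodular A B e : A \subset B -> B \subset U -> e \in U -> e \notin B ->
  RS w v wv B - RS w v wv (e |: B) <= RS w v wv A - RS w v wv (e |: A).
Proof.
move=> AB BU eU eB; have AU := subset_trans AB BU.
have eA : e \notin A := contra (subsetP AB e) eB.
have setU1_sub (C : {set 'I_n}) : C \subset U -> e |: C \subset U by rewrite subUset sub1set eU.
rewrite !RS_trace ?setU1_sub // !opprB !addrA !subrK.
apply: (tr_grounded_shunt_inv_supermodular v w_graph w_connected).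
- by move=> i; apply: edge_shunt_ge0.
- by move=> i; apply: edge_shunt_le.
- by move=> i; apply: edge_shunt_le; rewrite ?subsetUr ?setU1_sub.
- by move=> i; rewrite !edge_shunt_setU1.
Qed.

End CandidateEdges.

Theorem theorem3 (R : realType) (n : nat) (w : 'I_n -> 'I_n -> R) (v : 'I_n)
  (U : {set 'I_n}) (wv : 'I_n -> R) (k : nat) :
  wgraph w -> connected_graph w ->
  v \notin U -> (forall u, u \in U -> w u v = 0) ->
  (forall u, u \in U -> 0 < wv u) ->
  (0 < k)%N -> (k <= #|U|)%N ->
  forall s : seq 'I_n, greedy_run w v wv U k s ->
  forall Sstar : {set 'I_n}, Sstar \subset U -> #|Sstar| = k ->
  (forall S' : {set 'I_n}, S' \subset U -> #|S'| = k -> RS w v wv Sstar <= RS w v wv S') ->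
  RS w v wv set0 - RS w v wv [set x in s]
    >= (1 - (expR 1)^-1) * (RS w v wv set0 - RS w v wv Sstar).
Proof.
move=> w_graph w_connected vU _ wv_gt0 _ _ s [size_s greedy] Sstar SU cardS _.
apply: (greedy_approx_ratio (RS_antitone w_graph w_connected vU wv_gt0)
  (RS_supermodular w_graph w_connected vU wv_gt0) size_s _ SU cardS).
by move=> i ik; apply: greedy i ik v.
Qed.
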